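(* Let $\mathbb{K}$ be a field of characteristic $2$ and let $(A,\cdot,\{-,-\},(-)^{\{2\}})$ be a restricted Poisson algebra. Then the second cohomology space $\mathrm{H}^2_{\rm PA}(A)$ classifies the infinitesimal deformations of $A$ up to equivalence: assigning to an infinitesimal deformation $(A^t_1,\cdot,\{-,-\}+t\mu_1,(-)^{\{2\}}+t\omega_1)$ the class of $(\mu_1,\omega_1)$ gives a bijection between equivalence classes of infinitesimal deformations and $\mathrm{H}^2_{\rm PA}(A)$.
   Context: $\mathbb{K}$ has characteristic $2$. Restricted Poisson algebra: commutative associative $(A,\cdot)$ with Lie bracket satisfying $\{ab,c\}=a\{b,c\}+b\{a,c\}$, with a map $(-)^{\{2\}}$ making $(A,\{,\})$ a restricted Lie algebra ($(\lambda x)^{\{2\}}=\lambda^2x^{\{2\}}$, $\mathrm{ad}_{x^{\{2\}}}=\mathrm{ad}_x^2$, $(x+y)^{\{2\}}=x^{\{2\}}+y^{\{2\}}+\{x,y\}$) and $(xy)^{\{2\}}=x^2y^{\{2\}}+y^2x^{\{2\}}+xy\{x,y\}$. $\mathfrak{X}^k(A)$: alternating $k$-linear maps $A^k\to A$ that are derivations of $\cdot$ in each argument. $C^1_{\rm PA}(A)=\mathfrak{X}^1(A)$; for $n\ge2$, $C^n_{\rm PA}(A)$ = pairs $(\varphi,\omega)$, $\varphi\in\mathfrak{X}^n(A)$, $\omega:A\times A^{n-2}\to A$ alternating multilinear in last $n-2$ arguments, with $\omega(\lambda x,z)=\lambda^2\omega(x,z)$, $\omega(x+y,z)=\omega(x,z)+\omega(y,z)+\varphi(x,y,z)$,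 $\omega(xy,z)=x^2\omega(y,z)+y^2\omega(x,z)+xy\varphi(x,y,z)$, $\omega(x,..,z_iz_i',..)=z_i\omega(x,..,z_i',..)+z_i'\omega(x,..,z_i,..)$. Differentials: $\mathrm{d}^1\psi=(\mathrm{d}_{\rm CE}\psi,\delta^1\psi)$ with $\mathrm{d}_{\rm CE}\psi(x,y)=\psi(\{x,y\})+\{x,\psi(y)\}+\{y,\psi(x)\}$, $\delta^1\psi(x)=\psi(x^{\{2\}})+\{x,\psi(x)\}$; $\mathrm{d}^2(\varphi,\omega)=(\mathrm{d}_{\rm CE}\varphi,\delta^2\omega)$ with $\mathrm{d}_{\rm CE}\varphi(x,y,z)=\varphi(\{x,y\},z)+\varphi(\{x,z\},y)+\varphi(\{y,z\},x)+\{x,\varphi(y,z)\}+\{y,\varphi(x,z)\}+\{z,\varphi(x,y)\}$ and $\delta^2\omega(x,z)=\{x,\varphi(x,z)\}+\{z,\omega(x)\}+\varphi(x^{\{2\}},z)+\varphi(\{x,z\},x)$. $\mathrm{H}^2_{\rm PA}(A)=\ker\mathrm{d}^2/\mathrm{im}\,\mathrm{d}^1$ in $C^2_{\rm PA}(A)$. Let $\mathbb{K}^t_k=\mathbb{K}[t]/(t^{k+1})$ and $A^t_k=A\otimes\mathbb{K}^t_k$ with the $\mathbb{K}^t_k$-bilinear extension of $\cdot$. A deformation of order $k$ is given by $\mu_{(k)}=\{-,-\}+\sum_{i=1}^kt^i\mu_i$ and $\omega_{(k)}=(-)^{\{2\}}+\sum_{i=1}^kt^i\omega_i$ with $(\mu_i,\omega_i)\in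 C^2_{\rm PA}(A)$, such that $(A^t_k,\mu_{(k)},\omega_{(k)})$ (with $\mu_{(k)}$ extended $\mathbb{K}^t_k$-bilinearly and $\omega_{(k)}$ extended by $\omega(\lambda X)=\lambda^2\omega(X)$, $\omega(X+Y)=\omega(X)+\omega(Y)+\mu(X,Y)$) is a restricted Lie algebra over $\mathbb{K}^t_k$. Infinitesimal means $k=1$. Two deformations of order $k$ are equivalent if there is an isomorphism of restricted Poisson algebras between them of the form $\Psi=\mathrm{id}+\sum_{i\ge1}t^i\psi_i$ with $\psi_i:A\to A$ linear. *)

From HB Require Import structures.
From mathcomp Require Import all_boot all_algebra.
Set Implicit Arguments. Unset Strict Implicit. Unset Printing Implicit Defensive.
Import GRing.Theory.
Local Open Scope ring_scope.

Definition is_rLie (S V : Type) (add : V -> V -> V) (zero : V)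
  (smul : S -> V -> V) (sq : S -> S) (br : V -> V -> V) (pm : V -> V) :=
  [/\ forall l X Y Z, br (add (smul l X) Y) Z = add (smul l (br X Z)) (br Y Z),
      forall l X Y Z, br Z (add (smul l X) Y) = add (smul l (br Z X)) (br Z Y),
      forall X, br X X = zero,
      forall X Y Z, add (add (br X (br Y Z)) (br Y (br Z X))) (br Z (br X Y)) = zero &
    [/\ forall l X, pm (smul l X) = smul (sq l) (pm X),
      forall X Y, pm (add X Y) = add (add (pm X) (pm Y)) (br X Y) &
      forall X Y, br (pm X) Y = br X (br X Y)]].

Section RPA.
Variables (K : fieldType) (A : lmodType K).
Variables (mul br : A -> A -> A) (pm : A -> A).

Definition is_rPA :=
  [/\ forall a x y z, mul (a *: x + y) z = a *: mul x z + mul y z,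
      forall x y, mul x y = mul y x,
      forall x y z, mul x (mul y z) = mul (mul x y) z &
    [/\
      is_rLie +%R 0 *:%R (fun l : K => l ^+ 2) br pm,
      forall a b c, br (mul a b) c = mul a (br b c) + mul b (br a c) &
      forall x y, pm (mul x y) =
        mul (mul x x) (pm y) + mul (mul y y) (pm x) + mul (mul x y) (br x y)]].

Definition is_linear (f : A -> A) := forall a x y, f (a *: x + y) = a *: f x + f y.

Definition in_X1 (psi : A -> A) :=
  is_linear psi /\ forall x y, psi (mul x y) = mul x (psi y) + mul y (psi x).

Definition in_X2 (phi : A -> A -> A) :=
  [/\ forall a x y z, phi (a *: x + y) z = a *: phi x z + phi y z,
      forall a x y z, phi z (a *: x + y) = a *: phi z x + phi z y,
      forall x, phi x x = 0,
      forall x y z, phi (mul x y) z = mul x (phi y z) + mul y (phi x z) &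
      forall x y z, phi z (mul x y) = mul x (phi z y) + mul y (phi z x)].

Definition in_C2 (phi : A -> A -> A) (om : A -> A) :=
  [/\ in_X2 phi,
      forall (l : K) x, om (l *: x) = l ^+ 2 *: om x,
      forall x y, om (x + y) = om x + om y + phi x y &
      forall x y, om (mul x y) =
        mul (mul x x) (om y) + mul (mul y y) (om x) + mul (mul x y) (phi x y)].

Definition dCE1 (psi : A -> A) x y := psi (br x y) + br x (psi y) + br y (psi x).
Definition delta1 (psi : A -> A) x := psi (pm x) + br x (psi x).
Definition dCE2 (phi : A -> A -> A) x y z :=
  phi (br x y) z + phi (br x z) y + phi (br y z) x
  + br x (phi y z) + br y (phi x z) + br z (phi x y).
Definition delta2 (phi : A -> A -> A) (om : A -> A) x z :=
  br x (phi x z) + br z (om x) + phi (pm x) z + phi (br x z) x.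

Definition cocycle2 phi om :=
  [/\ in_C2 phi om, forall x y z, dCE2 phi x y z = 0 &
      forall x z, delta2 phi om x z = 0].

Definition coboundary2 (phi : A -> A -> A) (om : A -> A) :=
  exists psi, [/\ in_X1 psi, forall x y, phi x y = dCE1 psi x y &
                  forall x, om x = delta1 psi x].

(* (l0, l1) represents l0 + t l1;  (a, b) represents a + t b.                *)
Definition tmul (l m : K * K) : K * K := (l.1 * m.1, l.1 * m.2 + l.2 * m.1).
Definition tsq (l : K * K) := tmul l l.
Definition tadd (X Y : A * A) : A * A := (X.1 + Y.1, X.2 + Y.2).
Definition tzero : A * A := (0, 0).
Definition tscale (l : K * K) (X : A * A) : A * A :=
  (l.1 *: X.1, l.1 *: X.2 + l.2 *: X.1).
Definition tprod (X Y : A * A) : A * A :=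
  (mul X.1 Y.1, mul X.1 Y.2 + mul X.2 Y.1).
(* K^t_1-bilinear extension of mu_(1) = {-,-} + t mu1 *)
Definition tbr (mu1 : A -> A -> A) (X Y : A * A) : A * A :=
  (br X.1 Y.1, br X.1 Y.2 + br X.2 Y.1 + mu1 X.1 Y.1).
(* extension of om_(1) = (-)^{2} + t om1 by om(lX)=l^2 om(X),
   om(X+Y)=om(X)+om(Y)+mu(X,Y):  om(a + t b) = a^{2} + t (om1 a + {a,b}) *)
Definition tpm (om1 : A -> A) (X : A * A) : A * A :=
  (pm X.1, om1 X.1 + br X.1 X.2).

Definition inf_deformation mu1 om1 :=
  in_C2 mu1 om1 /\ is_rLie tadd tzero tscale tsq (tbr mu1) (tpm om1).

Definition equiv_deformations mu1 om1 mu1' om1' :=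
  exists psi1 : A -> A, is_linear psi1 /\
    let Psi := fun X : A * A => (X.1, X.2 + psi1 X.1) in
    [/\ bijective Psi,
        forall l X, Psi (tscale l X) = tscale l (Psi X),
        forall X Y, Psi (tadd X Y) = tadd (Psi X) (Psi Y) &
      [/\
        forall X Y, Psi (tprod X Y) = tprod (Psi X) (Psi Y),
        forall X Y, Psi (tbr mu1 X Y) = tbr mu1' (Psi X) (Psi Y) &
        forall X, Psi (tpm om1 X) = tpm om1' (Psi X)]].

End RPA.

From HB Require Import structures.
From mathcomp Require Import all_boot all_algebra.
Set Implicit Arguments. Unset Strict Implicit. Unset Printing Implicit Defensive.
Import GRing.Theory.
Local Open Scope ring_scope.

(* Write X = x1 + t x2 in A^t_1.  The deformed operations, and an equivalence
   id + t psi, agree with the undeformed ones modulo t, so in every axiom the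
   t^0-component is an axiom of A and the t^1-component involves the second
   coordinates only through identities of A.  What remains of it is a
   condition on the first coordinates alone: d_CE mu = 0 and delta^2 = 0 for a
   deformation, mu - mu' = d_CE psi and om - om' = delta^1 psi for an
   equivalence (in characteristic 2 all signs disappear). *)

Lemma eq_iff_subr (V : zmodType) (x y u v : V) :
  x - y = u - v -> (x = y <-> u = v).
Proof.
move=> E; split=> [xy | uv]; apply/eqP; rewrite -subr_eq0.
- by rewrite -E xy subrr.
- by rewrite E uv subrr.
Qed.

Lemma pair_eq_snd (T1 T2 : Type) (P Q : T1 * T2) :
  P.1 = Q.1 -> (P = Q <-> P.2 = Q.2).
Proof. by case: P Q => [a b] [c d] /= ->; split=> [[]|->]. Qed.

Section Char2Module.
Variables (K : fieldType) (A : lmodType K).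
Hypothesis charK : 2%N \in [pchar K].

Lemma addvv_pchar2 (x : A) : x + x = 0.
Proof. by rewrite -[x]scale1r -scalerDl (addrr_pchar2 charK) scale0r. Qed.

Lemma oppv_pchar2 (x : A) : - x = x.
Proof. by apply/esym/eqP; rewrite -addr_eq0 addvv_pchar2. Qed.

Lemma addKv_pchar2 (x y : A) : x + (x + y) = y.
Proof. by rewrite addrA addvv_pchar2 add0r. Qed.

Lemma eq_pchar2 (x y : A) : x + y = 0 -> x = y.
Proof. by move=> E; rewrite -[y](addKv_pchar2 x) E addr0. Qed.

Lemma eq_pchar2_by (s x y : A) : s = 0 -> x + y + s = 0 -> x = y.
Proof. by move=> -> /eqP; rewrite addr0 => /eqP /eq_pchar2. Qed.

End Char2Module.

Ltac pull_summand t e :=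
  match e with
  | ?s + ?r => let _ := constr:(erefl s : s = t) in constr:(erefl e : e = t + r)
  | ?s + ?r => let p := pull_summand t r in
      lazymatch type of p with
      | _ = _ + ?r' => constr:(etrans (congr1 (fun z => s + z) p) (addrCA s t r'))
      end
  | ?s => let _ := constr:(erefl s : s = t) in constr:(esym (addr0 t) : e = t + 0)
  end.

(* Closes [t1 + (t2 + ... + tn) = 0] in characteristic 2 when the summands
   cancel in pairs of convertible terms. *)
Ltac cancel_pairs charK :=
  lazymatch goal with
  | |- 0 = 0 => reflexivity
  | |- ?t + ?r = 0 =>
      let p := pull_summand t r in
      lazymatch type of p with
      | _ = _ + ?r' =>
          refine (etrans (congr1 (fun z => t + z) p) (etrans (addKv_pchar2 charK t r') _));
          cancel_pairs charK
      end
  end.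

Ltac pchar2_cancel charK := rewrite ?(oppv_pchar2 charK) -!addrA; cancel_pairs charK.

Section LinearMaps.
Variables (K : fieldType) (A : lmodType K) (f : A -> A).
Hypothesis linf : is_linear f.

Lemma is_linearD x y : f (x + y) = f x + f y.
Proof. by have := linf 1 x y; rewrite !scale1r. Qed.

Lemma is_linear0 : f 0 = 0.
Proof. by apply: (addrI (f 0)); rewrite -is_linearD !addr0. Qed.

Lemma is_linearZ a x : f (a *: x) = a *: f x.
Proof. by have := linf a x 0; rewrite addr0 is_linear0 addr0. Qed.

End LinearMaps.

Lemma alt_bilin_sym (K : fieldType) (A : lmodType K) (f : A -> A -> A) :
  2%N \in [pchar K] -> (forall z, is_linear (f^~ z)) -> (forall z, is_linear (f z)) ->
  (forall x, f x x = 0) -> forall x y, f x y = f y x.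
Proof.
move=> charK fl fr fxx x y; apply: eq_pchar2 => //.
have := fxx (x + y); rewrite (is_linearD (fl _)) !(is_linearD (fr _)).
by rewrite !fxx add0r addr0.
Qed.

Section RestrictedPoisson.
Variables (K : fieldType) (A : lmodType K) (mul br : A -> A -> A) (pm : A -> A).
Hypotheses (charK : 2%N \in [pchar K]) (rPA : is_rPA mul br pm).

Lemma mul_linear_l z : is_linear (mul^~ z).
Proof. by move=> a x y; case: rPA => ml *; apply: ml. Qed.
Lemma br_linear_l z : is_linear (br^~ z).
Proof. by move=> a x y; case: rPA => _ _ _ [[bl *]]; apply: bl. Qed.
Lemma br_linear_r z : is_linear (br z).
Proof. by move=> a x y; case: rPA => _ _ _ [[_ brr *]]; apply: brr. Qed.

Lemma mulC x y : mul x y = mul y x. Proof. by case: rPA. Qed.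
Lemma mulDl x y z : mul (x + y) z = mul x z + mul y z.
Proof. exact: is_linearD (mul_linear_l z) x y. Qed.
Lemma mulDr x y z : mul z (x + y) = mul z x + mul z y.
Proof. by rewrite !(mulC z) mulDl. Qed.
Lemma mul0r x : mul x 0 = 0.
Proof. by rewrite mulC; apply: is_linear0 (mul_linear_l x). Qed.

Lemma brDl x y z : br (x + y) z = br x z + br y z.
Proof. exact: is_linearD (br_linear_l z) x y. Qed.
Lemma brZl a x z : br (a *: x) z = a *: br x z.
Proof. exact: is_linearZ (br_linear_l z) a x. Qed.
Lemma brDr x y z : br z (x + y) = br z x + br z y.
Proof. exact: is_linearD (br_linear_r z) x y. Qed.
Lemma brZr a x z : br z (a *: x) = a *: br z x.
Proof. exact: is_linearZ (br_linear_r z) a x. Qed.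
Lemma br0r x : br x 0 = 0.
Proof. exact: is_linear0 (br_linear_r x). Qed.
Lemma brxx x : br x x = 0. Proof. by case: rPA => _ _ _ [[]]. Qed.
Lemma brC x y : br x y = br y x.
Proof. exact: alt_bilin_sym charK br_linear_l br_linear_r brxx x y. Qed.
Lemma br_jacobi x y z : br x (br y z) + br y (br z x) + br z (br x y) = 0.
Proof. by case: rPA => _ _ _ [[]]. Qed.
Lemma br_pm x y : br (pm x) y = br x (br x y).
Proof. by case: rPA => _ _ _ [[_ _ _ _ []]]. Qed.

Section Deformation.
Variable mu : A -> A -> A.
Hypothesis X2mu : in_X2 mul mu.

Lemma mu_linear_l z : is_linear (mu^~ z).
Proof. by move=> a x y; case: X2mu => ml *; apply: ml. Qed.
Lemma mu_linear_r z : is_linear (mu z).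
Proof. by move=> a x y; case: X2mu => _ mr *; apply: mr. Qed.
Lemma muxx x : mu x x = 0. Proof. by case: X2mu. Qed.

Lemma muDl x y z : mu (x + y) z = mu x z + mu y z.
Proof. exact: is_linearD (mu_linear_l z) x y. Qed.
Lemma muZl a x z : mu (a *: x) z = a *: mu x z.
Proof. exact: is_linearZ (mu_linear_l z) a x. Qed.
Lemma muC x y : mu x y = mu y x.
Proof. exact: alt_bilin_sym charK mu_linear_l mu_linear_r muxx x y. Qed.

Notation tbr := (tbr br mu).

Lemma tbrC X Y : tbr X Y = tbr Y X.
Proof. by rewrite /tbr brC muC (brC X.1 Y.2) (brC X.2) [_ + br _ _]addrC. Qed.

Lemma tbr_linear l X Y Z :
  tbr (tadd (tscale l X) Y) Z = tadd (tscale l (tbr X Z)) (tbr Y Z).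
Proof.
case: X Y Z l => [x1 x2] [y1 y2] [z1 z2] [l1 l2].
rewrite /tbr /tadd /tscale /=; congr (_, _); first by rewrite brDl brZl.
apply: eq_pchar2 => //.
rewrite !(brDl, brZl, muDl, muZl, scalerDr); pchar2_cancel charK.
Qed.

Lemma tbrxx X : tbr X X = tzero A.
Proof. by rewrite /tbr brxx (brC X.2) addvv_pchar2 // add0r muxx. Qed.

Lemma tpmZ om : (forall l x, om (l *: x) = l ^+ 2 *: om x) ->
  forall l X, tpm br pm om (tscale l X) = tscale (tsq l) (tpm br pm om X).
Proof.
move=> omZ l X; case: X l => [x1 x2] [l1 l2].
rewrite /tpm /tscale /tsq /tmul /=; congr (_, _).
  by case: rPA => _ _ _ [[_ _ _ _ [-> _ _]] _ _]; rewrite expr2.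
rewrite omZ !(brZl, brZr, brDr) brxx !scaler0 addr0 !scalerA -expr2.
by rewrite scalerDr (mulrC l2) (addrr_pchar2 charK) scale0r addr0.
Qed.

Lemma tpmD om : (forall x y, om (x + y) = om x + om y + mu x y) ->
  forall X Y, tpm br pm om (tadd X Y)
              = tadd (tadd (tpm br pm om X) (tpm br pm om Y)) (tbr X Y).
Proof.
move=> omD X Y; case: X Y => [x1 x2] [y1 y2].
rewrite /tpm /tadd /tbr /=; congr (_, _).
  by case: rPA => _ _ _ [[_ _ _ _ [_ -> _]] _ _].
apply: eq_pchar2 => //; rewrite omD !(brDl, brDr) (brC y1 x2); pchar2_cancel charK.
Qed.

Lemma tbr_jacobi_snd X Y Z :
  (tadd (tadd (tbr X (tbr Y Z)) (tbr Y (tbr Z X))) (tbr Z (tbr X Y))).2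
  = dCE2 br mu X.1 Y.1 Z.1.
Proof.
case: X Y Z => [x1 x2] [y1 y2] [z1 z2]; rewrite /tbr /tadd /dCE2 /=.
apply: (eq_pchar2_by charK (s := (br x2 (br y1 z1) + br y1 (br z1 x2) + br z1 (br x2 y1))
  + (br x1 (br y2 z1) + br y2 (br z1 x1) + br z1 (br x1 y2))
  + (br x1 (br y1 z2) + br y1 (br z2 x1) + br z2 (br x1 y1)))).
  by rewrite !br_jacobi !addr0.
rewrite !brDr (muC x1 (br y1 z1)) (muC y1 (br z1 x1)) (muC z1 (br x1 y1)).
rewrite (muC z1 x1) (brC z1 x1); pchar2_cancel charK.
Qed.

Lemma tbr_jacobiP X Y Z :
  tadd (tadd (tbr X (tbr Y Z)) (tbr Y (tbr Z X))) (tbr Z (tbr X Y)) = tzero A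
  <-> dCE2 br mu X.1 Y.1 Z.1 = 0.
Proof.
by apply: iff_trans (pair_eq_snd _) _; [apply: br_jacobi | rewrite tbr_jacobi_snd].
Qed.

Lemma tpm_adjointP om X Y :
  tbr (tpm br pm om X) Y = tbr X (tbr X Y) <-> delta2 br pm mu om X.1 Y.1 = 0.
Proof.
apply: iff_trans (pair_eq_snd _) _; first exact: br_pm.
apply: eq_iff_subr; case: X Y => [x1 x2] [y1 y2]; rewrite /tbr /tpm /delta2 /= subr0.
apply: (eq_pchar2_by charK (s := br (pm x1) y2 + br x1 (br x1 y2)
  + (br x1 (br x2 y1) + br x2 (br y1 x1) + br y1 (br x1 x2)))).
  by rewrite br_pm addvv_pchar2 // br_jacobi addr0.
rewrite !(brDl, brDr) (brC (om x1) y1) (brC (br x1 x2) y1) (brC y1 x1).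
rewrite (muC x1 (br x1 y1)); pchar2_cancel charK.
Qed.

End Deformation.

Lemma inf_deformationP mu om :
  inf_deformation mul br pm mu om <-> cocycle2 mul br pm mu om.
Proof.
split=> [[C2 [_ _ _ jacobi [_ _ adjoint]]] | [C2 dCE2_0 delta2_0]];
  have [X2 omZ omD _] := C2.
  split=> // [x y z | x z].
  - exact/(tbr_jacobiP X2 (x, 0) (y, 0) (z, 0))/jacobi.
  - exact/(tpm_adjointP X2 om (x, 0) (z, 0))/adjoint.
split=> //; split.
- exact: tbr_linear X2.
- by move=> l X Y Z; rewrite !(tbrC X2 Z) tbr_linear.
- exact: tbrxx X2.
- by move=> X Y Z; apply/(tbr_jacobiP X2).
- split; [exact: tpmZ | exact: tpmD | by move=> X Y; apply/(tpm_adjointP X2)].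
Qed.

Definition shear (psi : A -> A) (X : A * A) : A * A := (X.1, X.2 + psi X.1).

Section Shear.
Variable psi : A -> A.

Lemma shear_bij : bijective (shear psi).
Proof.
by apply: (@Bijective _ _ _ (fun X => (X.1, X.2 - psi X.1))) => -[x1 x2];
  rewrite /shear /= ?addrK ?subrK.
Qed.

Hypothesis linpsi : is_linear psi.

Lemma shear_tscale l X : shear psi (tscale l X) = tscale l (shear psi X).
Proof. by rewrite /shear /tscale /= (is_linearZ linpsi) scalerDr addrAC. Qed.

Lemma shear_tadd X Y : shear psi (tadd X Y) = tadd (shear psi X) (shear psi Y).
Proof. by rewrite /shear /tadd /= (is_linearD linpsi) addrACA. Qed.

End Shear.

Lemma shear_tprodP psi X Y :
  shear psi (tprod mul X Y) = tprod mul (shear psi X) (shear psi Y)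
  <-> psi (mul X.1 Y.1) = mul X.1 (psi Y.1) + mul Y.1 (psi X.1).
Proof.
apply: iff_trans (pair_eq_snd _) _ => //; apply: eq_iff_subr.
case: X Y => [x1 x2] [y1 y2]; rewrite /shear /tprod /=; apply: eq_pchar2 => //.
rewrite mulDr mulDl (mulC (psi x1)); pchar2_cancel charK.
Qed.

Lemma shear_tbrP psi mu mu' X Y :
  shear psi (tbr br mu X Y) = tbr br mu' (shear psi X) (shear psi Y)
  <-> mu X.1 Y.1 - mu' X.1 Y.1 = dCE1 br psi X.1 Y.1.
Proof.
apply: iff_trans (pair_eq_snd _) _ => //; apply: eq_iff_subr.
case: X Y => [x1 x2] [y1 y2]; rewrite /shear /tbr /dCE1 /=; apply: eq_pchar2 => //.
rewrite brDr brDl (brC (psi x1)); pchar2_cancel charK.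
Qed.

Lemma shear_tpmP psi om om' X :
  shear psi (tpm br pm om X) = tpm br pm om' (shear psi X)
  <-> om X.1 - om' X.1 = delta1 br pm psi X.1.
Proof.
apply: iff_trans (pair_eq_snd _) _ => //; apply: eq_iff_subr.
case: X => [x1 x2]; rewrite /shear /tpm /delta1 /=; apply: eq_pchar2 => //.
rewrite brDr; pchar2_cancel charK.
Qed.

Lemma equiv_deformationsP mu om mu' om' :
  equiv_deformations mul br pm mu om mu' om' <->
  coboundary2 mul br pm (fun x y => mu x y - mu' x y) (fun x => om x - om' x).
Proof.
split=> [[psi [linpsi [_ _ _ [Hprod Hbr Hpm]]]] | [psi [[linpsi der] Hbr Hpm]]].
  exists psi; split; [split=> // x y | move=> x y | move=> x].
  - exact/(shear_tprodP psi (x, 0) (y, 0))/Hprod.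
  - exact/(shear_tbrP psi mu mu' (x, 0) (y, 0))/Hbr.
  - exact/(shear_tpmP psi om om' (x, 0))/Hpm.
exists psi; split=> //; split.
- exact: shear_bij.
- exact: shear_tscale.
- exact: shear_tadd.
- split=> [X Y | X Y | X].
  + exact/shear_tprodP/der.
  + exact/shear_tbrP/Hbr.
  + exact/shear_tpmP/Hpm.
Qed.

Lemma coboundary2_0 phi om : (forall x y, phi x y = 0) -> (forall x, om x = 0) ->
  coboundary2 mul br pm phi om.
Proof.
move=> phi0 om0; exists (fun _ => 0); split=> [|x y|x].
- by split=> [a x y | x y]; rewrite ?scaler0 ?addr0 ?mul0r ?addr0.
- by rewrite phi0 /dCE1 !br0r !addr0.
- by rewrite om0 /delta1 br0r addr0.
Qed.

End RestrictedPoisson.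

Theorem mainTheorem6 (K : fieldType) (A : lmodType K)
  (mul br : A -> A -> A) (pm : A -> A) :
  2%N \in [pchar K] -> is_rPA mul br pm ->
  [/\ (forall mu1 om1, inf_deformation mul br pm mu1 om1 ->
         cocycle2 mul br pm mu1 om1),
      (forall mu1 om1 mu1' om1',
         inf_deformation mul br pm mu1 om1 ->
         inf_deformation mul br pm mu1' om1' ->
         (equiv_deformations mul br pm mu1 om1 mu1' om1' <->
          coboundary2 mul br pm (fun x y => mu1 x y - mu1' x y)
                                (fun x => om1 x - om1' x))) &
      (forall phi om, cocycle2 mul br pm phi om ->
         exists mu1 om1, inf_deformation mul br pm mu1 om1 /\
           coboundary2 mul br pm (fun x y => mu1 x y - phi x y)
                                 (fun x => om1 x - om x))].
Proof.
move=> charK rPA; split.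
- by move=> mu om /(inf_deformationP charK rPA).
- by move=> mu om mu' om' _ _; apply: equiv_deformationsP.
- move=> phi om cocycle; exists phi, om; split; first exact/(inf_deformationP charK rPA).
  by apply: (coboundary2_0 rPA) => *; rewrite subrr.
Qed.
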